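(* Let $g,h:\mathbb R\to\mathbb R$ be Borel functions and let $\mathcal R_{g,h}$ be the set of all products $\varrho_1\times\varrho_2$ of Borel probability measures on $\mathbb R$ with respect to which $g$ and $h$ are weakly comonotonic. Let $\mathcal R_{\rm c}=\{\delta_x\times\delta_{x'}:x,x'\in\mathbb R\}$ and $\mathcal R_{\rm a}=\{\delta_x\times\delta_x:x\in\mathbb R\}$. Then: (i) $\mathcal R_{g,h}\supseteq\mathcal R_{\rm c}$ if and only if $g$ and $h$ are strongly comonotonic; (ii) $\mathcal R_{g,h}=\mathcal R_{\rm a}$ if and only if $g$ and $h$ are strongly antimonotonic and injective on $\mathbb R$.
   Context: $\delta_x$ denotes the point mass at $x$. Functions $g,h$ are weakly comonotonic with respect to a product measure $\varrho_1\times\varrho_2$ on $(\mathbb R^2,\mathcal B(\mathbb R)\otimes\mathcal B(\mathbb R))$ if the integral $\iint_{\mathbb R^2}(g(x)-g(x'))(h(x)-h(x'))\,\varrho_1(\mathrm dx)\varrho_2(\mathrm dx')$ exists and is $\ge0$. $g$ and $h$ are strongly comonotonic if $(g(x)-g(x'))(h(x)-h(x'))\ge0$ for all $x,x'\in\mathbb R$, and strongly antimonotonic if $(g(x)-g(x'))(h(x)-h(x'))\le0$ for all $x,x'\in\mathbb R$. *)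

From HB Require Import structures.
From mathcomp Require Import all_boot all_order all_algebra.
From mathcomp Require Import all_classical all_reals all_analysis measurable_realfun.
Set Implicit Arguments. Unset Strict Implicit. Unset Printing Implicit Defensive.
Import Order.TTheory GRing.Theory Num.Theory.
Local Open Scope classical_set_scope.
Local Open Scope ring_scope.

Section defs.
Variable R : realType.

Definition cmf (g h : R -> R) (z : R * R) : \bar R :=
  ((g z.1 - g z.2) * (h z.1 - h z.2))%:E.

Definition integral_exists (mu : set (R * R) -> \bar R) (f : R * R -> \bar R) :=
  measurable_fun [set: R * R] f /\
  ((\int[mu]_z (f^\+ z) < +oo)%E \/ (\int[mu]_z (f^\- z) < +oo)%E).

Definition weakly_comonotonic (g h : R -> R) (mu : set (R * R) -> \bar R) :=
  integral_exists mu (cmf g h) /\ (0 <= \int[mu]_z cmf g h z)%E.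

Definition strongly_comonotonic (g h : R -> R) :=
  forall x x', 0 <= (g x - g x') * (h x - h x').

Definition strongly_antimonotonic (g h : R -> R) :=
  forall x x', (g x - g x') * (h x - h x') <= 0.

Definition meas_eq (P Q : set (R * R) -> \bar R) :=
  forall A, measurable A -> P A = Q A.

Definition in_Rgh (g h : R -> R) (P : set (R * R) -> \bar R) :=
  exists (r1 r2 : probability R R),
    meas_eq P (r1 \x r2)%E /\ weakly_comonotonic g h (r1 \x r2)%E.

Definition in_Rc (P : set (R * R) -> \bar R) :=
  exists x x' : R, meas_eq P ((\d_x : set R -> \bar R) \x (\d_x' : set R -> \bar R))%E.

Definition in_Ra (P : set (R * R) -> \bar R) :=
  exists x : R, meas_eq P ((\d_x : set R -> \bar R) \x (\d_x : set R -> \bar R))%E.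

End defs.

From HB Require Import structures.
From mathcomp Require Import all_boot all_order all_algebra.
From mathcomp Require Import all_classical all_reals all_analysis measurable_realfun.
Import Order.TTheory GRing.Theory Num.Theory.
Local Open Scope classical_set_scope.
Local Open Scope ring_scope.

(* For a product of point masses the integral of (g x - g x')(h x - h x') is
   its value at the point; this gives (i) and the inclusion of R_a in R_{g,h}.
   Strong antimonotonicity together with injectivity says that the integrand
   is < 0 off the diagonal, so for r1 x r2 in R_{g,h} it vanishes almost
   everywhere and r1 x r2 lives on the diagonal. By Fubini, for r1-almost every
   x the measure r2 is concentrated at x; as r1 has mass 1 such an x0 exists,
   and then r1 is concentrated at x0 as well. Conversely, if the integrand is
   >= 0 at some x <> x', then delta_x x delta_x' lies in R_{g,h} \ R_a. *)

Section ae_integral.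
Context {R : realType}.
Local Open Scope ereal_scope.

Lemma integral_dirac_measure {d} {T : measurableType d}
    (mu : {measure set T -> \bar R}) (a : T) (f : T -> \bar R) :
  (forall A, measurable A -> mu A = \d_a A) -> measurable_fun setT f ->
  \int[mu]_z f z = f a.
Proof.
move=> mu_a mf; rewrite (eq_measure_integral \d_a) => [|A mA _].
  by rewrite integral_dirac// diracT mul1e.
exact: mu_a.
Qed.

Lemma nonpos_integral_ge0_ae_eq0 {d} {T : measurableType d}
    {mu : {measure set T -> \bar R}} {f : T -> \bar R} :
  measurable_fun setT f -> (forall z, f z <= 0) -> 0 <= \int[mu]_z f z ->
  \forall z \ae mu, f z = 0.
Proof.
move=> mf f_le0 If_ge0.
have f_le0' : forall z, setT z -> f z <= 0 by move=> z _.
have Ifpos : \int[mu]_z f^\+ z = 0.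
  by apply: integral0_eq => z _; apply: (le0_funeposE f_le0'); rewrite in_setT.
have Iabs : \int[mu]_z `|f z| = \int[mu]_z f^\- z.
  apply: eq_integral => z _.
  by rewrite lee0_abs// (le0_funenegE f_le0') ?in_setT.
have Iabs0 : \int[mu]_z `|f z| = 0.
  apply/le_anti/andP; split; last exact: integral_ge0.
  by move: If_ge0; rewrite Iabs integralE Ifpos sub0e oppe_ge0.
have := (ae_eq_integral_abs mu measurableT mf).1 Iabs0.
by apply: filterS => z /(_ I).
Qed.

Lemma ae_product_measure1_xsection {d1 d2} {T1 : measurableType d1}
    {T2 : measurableType d2} {m1 : {measure set T1 -> \bar R}}
    {m2 : {sigma_finite_measure set T2 -> \bar R}} {P : set (T1 * T2)} :
  {ae m1 \x m2, forall z, P z} ->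
  {ae m1, forall x, {ae m2, forall y, P (x, y)}}.
Proof.
case=> N [mN m12N0 nPN].
have Isec0 : \int[m1]_x `|(m2 \o xsection N) x| = 0.
  by rewrite -m12N0; apply: eq_integral => x _; rewrite gee0_abs.
have := (ae_eq_integral_abs m1 measurableT
  (measurable_fun_xsection m2 mN)).1 Isec0.
apply: filterS => x /(_ I) m2N0; exists (xsection N x); split => //.
  exact: measurable_xsection.
by move=> y nPxy; rewrite /xsection /= inE; exact: nPN.
Qed.

End ae_integral.

Section point_masses.
Context {R : realType}.
Local Open Scope ereal_scope.

Lemma probability_concentratedE {r : probability R R} {x0 : R} :
  r (~` [set x0]) = 0 -> forall A, measurable A -> r A = \d_x0 A.
Proof.
move=> r0 A mA; have mC1 : measurable (~` [set x0]) by exact/measurableC.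
rewrite diracE; have [/set_mem Ax0|/negP Ax0] := boolP (x0 \in A).
  have rCA0 : r (~` A) = 0.
    apply/eqP; rewrite -measure_le0 -r0 le_measure ?inE//.
      exact: measurableC.
    by move=> y nAy yx0; apply: nAy; rewrite yx0.
  rewrite -(probability_setT r) -(setvU A) measureU ?setICl//.
    by rewrite -[LHS]add0e -rCA0 addeC.
  exact: measurableC.
apply/eqP; rewrite /= -measure_le0 -r0 le_measure ?inE// => y Ay yx0.
by apply: Ax0; rewrite -yx0 mem_set.
Qed.

Lemma product_measure1_concentratedE {r1 r2 : probability R R} {x1 x2 : R} :
  r1 (~` [set x1]) = 0 -> r2 (~` [set x2]) = 0 ->
  forall A, measurable A -> (r1 \x r2) A = \d_(x1, x2) A.
Proof.
move=> r10 r20 A mA; rewrite /product_measure1.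
rewrite (eq_measure_integral (\d_x1 : {measure set R -> \bar R})); last first.
  by move=> B mB _; exact: probability_concentratedE.
rewrite integral_dirac//; last exact: measurable_fun_xsection.
rewrite diracT mul1e /= (probability_concentratedE r20).
  by rewrite !diracE mem_xsection.
exact: measurable_xsection.
Qed.

Lemma product_measure1_diracE (x x' : R) A : measurable A ->
  ((\d_x : set R -> \bar R) \x (\d_x' : set R -> \bar R)) A = \d_(x, x') A.
Proof.
apply: product_measure1_concentratedE;
  by rewrite /= diracE memNset// => /(_ erefl).
Qed.

Lemma product_dirac_diag (x x' y : R) :
  meas_eq ((\d_x : set R -> \bar R) \x (\d_x' : set R -> \bar R))
          ((\d_y : set R -> \bar R) \x (\d_y : set R -> \bar R)) -> x = x'.
Proof.
have m1 : measurable ([set x] `*` [set x']) by apply: measurableX.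
move=> /(_ _ m1); rewrite !product_measure1_diracE// !diracE mem_set//.
have [/set_mem[/= <- <-]//|_ /eqP] := boolP ((y, y) \in _).
by rewrite eqe oner_eq0.
Qed.

Lemma probability_product_ae_diag {r1 r2 : probability R R} :
  {ae r1 \x r2, forall z, z.1 = z.2} ->
  exists x0, r1 (~` [set x0]) = 0 /\ r2 (~` [set x0]) = 0.
Proof.
move=> diag; have mC1 (x0 : R) : measurable (~` [set x0]) by exact/measurableC.
have r1_proper : ProperFilter (almost_everywhere r1).
  apply: ae_properfilter_algebraOfSetsType.
  by rewrite /= probability_setT lte01.
have [x0 r2x0] := filter_ex (ae_product_measure1_xsection diag).
have r2C0 : r2 (~` [set x0]) = 0.
  by apply/negligibleP => //; apply: negligibleS r2x0 => y /= yx0 /esym.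
exists x0; split => //.
have : (r1 \x r2).-negligible (~` [set x0] `*` [set x0]).
  by apply: negligibleS diag => -[a b] [/= ax0 ->].
rewrite negligibleP /= ?product_measure1E//; last exact: measurableX.
rewrite [X in _ * X = _ -> _](_ : _ = 1) ?mule1//.
apply: etrans (probability_concentratedE r2C0 _ (measurable_set1 x0)) _.
by rewrite diracE mem_set.
Qed.

End point_masses.

Definition strictly_antimonotonic {R : realType} (g h : R -> R) :=
  forall x x', x <> x' -> (g x - g x') * (h x - h x') < 0.

Section comonotonicity.
Context {R : realType} {g h : R -> R}.
Hypotheses (mg : measurable_fun setT g) (mh : measurable_fun setT h).
Local Open Scope ereal_scope.

Lemma strictly_antimonotonicP : strictly_antimonotonic g h <->
  strongly_antimonotonic g h /\ injective g /\ injective h.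
Proof.
split=> [anti|[anti [ig ih]] x x' xx'].
  split; [|split] => x x'.
  - have [->|xx'] := eqVneq x x'; first by rewrite subrr mul0r.
    exact/ltW/anti/eqP.
  - move=> gx; apply: contrapT => /anti; by rewrite gx subrr mul0r ltxx.
  - move=> hx; apply: contrapT => /anti; by rewrite hx subrr mulr0 ltxx.
rewrite lt_neqAle anti andbT mulf_eq0 negb_or !subr_eq0.
by apply/andP; split; apply/eqP => e; apply: xx'; [exact: ig|exact: ih].
Qed.

Lemma measurable_cmf : measurable_fun setT (cmf g h).
Proof.
apply/measurable_EFinP; apply: measurable_funM; apply: measurable_funB.
- exact: measurableT_comp mg measurable_fst.
- exact: measurableT_comp mg measurable_snd.
- exact: measurableT_comp mh measurable_fst.
- exact: measurableT_comp mh measurable_snd.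
Qed.

Lemma in_Rgh_diracP {x x' : R} {P : set (R * R) -> \bar R} :
  meas_eq P ((\d_x : set R -> \bar R) \x (\d_x' : set R -> \bar R)) ->
  in_Rgh g h P <-> (0 <= (g x - g x') * (h x - h x'))%R.
Proof.
move=> Pxx'.
have Icmf (mu : {measure set (R * R) -> \bar R}) :
    meas_eq mu ((\d_x : set R -> \bar R) \x (\d_x' : set R -> \bar R)) ->
    \int[mu]_z cmf g h z = cmf g h (x, x').
  move=> mu_xx'; apply: integral_dirac_measure measurable_cmf => A mA.
  by rewrite mu_xx'// product_measure1_diracE.
split=> [[r1 [r2 [Pr12 [_]]]]|cmf_ge0].
  by rewrite Icmf ?lee_fin// => A mA; rewrite -Pxx'// Pr12.
exists \d_x, \d_x'; split => //.
have Icmf_xx' := Icmf ((\d_x : probability R R) \x (\d_x' : probability R R))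
  (fun _ _ => erefl).
split; last by rewrite Icmf_xx' lee_fin.
split; first exact: measurable_cmf.
left; rewrite (integral_dirac_measure _ (x, x')).
- by rewrite funeposE /cmf gt_max !ltry.
- by move=> A; exact: product_measure1_diracE.
- exact: measurable_funepos measurable_cmf.
Qed.

Lemma strictly_antimonotonic_ae_diag {mu : {measure set (R * R) -> \bar R}} :
  strictly_antimonotonic g h -> weakly_comonotonic g h mu ->
  {ae mu, forall z, z.1 = z.2}.
Proof.
move=> anti [[mf _] Icmf_ge0].
have cmf_le0 z : cmf g h z <= 0.
  case: z => x x'; rewrite /cmf lee_fin /=.
  have [->|xx'] := eqVneq x x'; first by rewrite subrr mul0r.
  exact/ltW/anti/eqP.
have := nonpos_integral_ge0_ae_eq0 mf cmf_le0 Icmf_ge0.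
apply: filterS => -[x x'] [/= cmf0]; apply: contrapT => /anti.
by rewrite cmf0 ltxx.
Qed.

End comonotonicity.

Theorem theorem4p1 (R : realType) (g h : R -> R)
  (mg : measurable_fun setT g) (mh : measurable_fun setT h) :
  ((forall P : set (R * R) -> \bar R, in_Rc P -> in_Rgh g h P) <->
     strongly_comonotonic g h) /\
  ((forall P : set (R * R) -> \bar R, in_Rgh g h P <-> in_Ra P) <->
     strongly_antimonotonic g h /\ injective g /\ injective h).
Proof.
have Rgh_dirac x x' : in_Rgh g h
    ((\d_x : set R -> \bar R) \x (\d_x' : set R -> \bar R))%E <->
    0 <= (g x - g x') * (h x - h x').
  by apply: (in_Rgh_diracP mg mh) => A.
split.
  split=> [Rc_Rgh x x'|comono P [x [x' Pxx']]].
    by apply/Rgh_dirac/Rc_Rgh; exists x, x'.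
  exact/(in_Rgh_diracP mg mh Pxx').
rewrite -strictly_antimonotonicP; split=> [Rgh_Ra x x' xx'|anti P].
  rewrite ltNge; apply/negP => /Rgh_dirac/Rgh_Ra[y] /product_dirac_diag.
  exact: xx'.
split=> [[r1 [r2 [Pr12 wc]]]|[x Pxx]].
  have [x0 [r10 r20]] :=
    probability_product_ae_diag (strictly_antimonotonic_ae_diag anti wc).
  exists x0 => A mA.
  rewrite Pr12// (product_measure1_concentratedE r10 r20)//.
  by rewrite product_measure1_diracE.
by apply/(in_Rgh_diracP mg mh Pxx); rewrite subrr mul0r.
Qed.
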